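(* Let $d\ge2$ be an integer, $D_1,\dots,D_d$ real constants, $D=\sum_iD_i$. Define $m:[-D^2/d,\pi^2/d)\to[0,\infty)$ as follows (with $\mu=-\lambda$ when $\lambda<0$): $$m(\lambda)=\begin{cases}0 & \text{if } \lambda=-D^2/d<0,\\[2pt] \left|\ln\left(\dfrac{\big(\frac{e^{\sqrt{d\mu}}}{\sqrt{-C_-}}+1\big)\big(-\frac{1}{\sqrt{-C_-}}+1\big)}{\big(1-\frac{e^{\sqrt{d\mu}}}{\sqrt{-C_-}}\big)\big(1+\frac{1}{\sqrt{-C_-}}\big)}\right)\right| & \text{if } -D^2/d<\lambda<0,\\[2pt] |D| & \text{if } \lambda=0,\\[2pt] \left|\ln\dfrac{\tan(C_++\sqrt{d\lambda})+\sec(C_++\sqrt{d\lambda})}{\tan(C_+)+\sec(C_+)}\right| & \text{if } 0<\lambda<\pi^2/d,\end{cases}$$ where $C_-=\dfrac{e^{2\sqrt{d\mu}}-e^{D+\sqrt{d\mu}}}{e^{D+\sqrt{d\mu}}-1}$ and $C_+=\arctan\left(\dfrac{\cos(\sqrt{d\lambda})-e^D}{\sin(\sqrt{d\lambda})}\right)$. For $\lambda\in[-D^2/d,\pi^2/d)$, let $L=(L_1,\dots,L_d)\in C^1([0,1];\mathbb{R}^d)$ be the unique solution of $$L_i'=-\Big(\sum_{k=1}^dL_k\Big)L_i-\lambda\ \text{ on }[0,1],\qquad\int_0^1L_i(r)\,dr=D_i\qquad(i=1,\dots,d).$$ Then $L$ satisfies $$(d-1)\lambda=\sum_{i=1}^dL_i(0)^2-\Big(\sum_{i=1}^dL_i(0)\Big)^2$$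 if and only if $$m(\lambda)=\sqrt{\frac{d}{d-1}\sum_{i=1}^d\Big(D_i-\frac{D}{d}\Big)^2}.$$
   Context: For $-D^2/d<\lambda<0$ one has $C_-<0$, so $\sqrt{-C_-}$ is defined. *)

From Stdlib Require Import Reals Lra.
From Coquelicot Require Import Coquelicot.
Open Scope R_scope.

(* rsum n f = f 0 + ... + f (n-1)   (indices 0..n-1 stand for 1..n) *)
Fixpoint rsum (n : nat) (f : nat -> R) : R :=
  match n with
  | O => 0
  | S k => rsum k f + f k
  end.

Definition sec (x : R) : R := / cos x.

Definition Cminus (d : nat) (D mu : R) : R :=
  (exp (2 * sqrt (INR d * mu)) - exp (D + sqrt (INR d * mu)))
  / (exp (D + sqrt (INR d * mu)) - 1).

Definition Cplus (d : nat) (D lam : R) : R :=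
  atan ((cos (sqrt (INR d * lam)) - exp D) / sin (sqrt (INR d * lam))).

Definition mfun (d : nat) (D lam : R) : R :=
  if Rlt_dec lam 0 then
    if Req_EM_T lam (- D ^ 2 / INR d) then 0
    else
      let mu := - lam in
      let E := exp (sqrt (INR d * mu)) in
      let s := sqrt (- Cminus d D mu) in
      Rabs (ln (((E / s + 1) * (- (1 / s) + 1)) / ((1 - E / s) * (1 + 1 / s))))
  else if Req_EM_T lam 0 then Rabs D
  else
    let c := Cplus d D lam in
    let a := c + sqrt (INR d * lam) in
    Rabs (ln ((tan a + sec a) / (tan c + sec c))).

From Stdlib Require Import Reals Lra Lia.
From Coquelicot Require Import Coquelicot.
Open Scope R_scope.

(* Write [S = sum_i L_i], [c = d lam] and [X = S^2 + c]. Then [S' = - X] (a Riccati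
   equation with [int_0^1 S = D]), [X' = - 2 S X], and every deviation
   [v_i = L_i - S/d] solves [v_i' = - S v_i]. With [I r = int_0^r S] and
   [Phi = int_0^1 exp (- I)] this gives [X = X 0 exp (- 2 I)], hence
   [int_0^1 sqrt X = sqrt (X 0) Phi], and [D_i - D/d = v_i 0 Phi].
   The function [m] is exactly [int_0^1 sqrt X]: [ln (sg S + sqrt X)] is a primitive
   of [- sg sqrt X], and its endpoint values are read off the explicit Riccati
   flow ([S + k] and [S - k] solve linear equations when [c = - k^2];
   [atan (S / k)] decreases linearly when [c = k^2]); the lower bound on [lam]
   forces [X 0 >= 0]. Both sides of the equivalence then say
   [sum_i (v_i 0)^2 = (d - 1)/d X 0]. *)

Definition clamp01 (x : R) : R := Rmax 0 (Rmin 1 x).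

Lemma clamp01_in x : 0 <= clamp01 x <= 1.
Proof. unfold clamp01, Rmax, Rmin; repeat destruct Rle_dec; lra. Qed.

Lemma clamp01_id x : 0 <= x <= 1 -> clamp01 x = x.
Proof. unfold clamp01, Rmax, Rmin; repeat destruct Rle_dec; lra. Qed.

Lemma continuous_clamp01 x : continuous clamp01 x.
Proof.
  apply filterlim_locally. intros eps. exists eps. intros y Hy.
  change (Rabs (y - x) < eps) in Hy. change (Rabs (clamp01 y - clamp01 x) < eps).
  eapply Rle_lt_trans; [|exact Hy].
  unfold clamp01, Rmax, Rmin; repeat destruct Rle_dec; unfold Rabs; repeat destruct Rcase_abs; lra.
Qed.

(* Continuity on [0,1] is encoded as continuity on R of [f] precomposed with the
   retraction onto [0,1]; this extension agrees with [f] on [0,1]. *)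
Definition cont01 (f : R -> R) : Prop := forall x, continuous (fun y => f (clamp01 y)) x.

Lemma cont01_of_within f :
  (forall r, 0 <= r <= 1 ->
     filterlim f (within (fun x => 0 <= x <= 1) (locally r)) (locally (f r))) ->
  cont01 f.
Proof.
  intros H x. eapply filterlim_comp; [|apply H, clamp01_in].
  intros P HP. assert (Hc := continuous_clamp01 x _ HP). unfold filtermap in *.
  eapply filter_imp; [|exact Hc]. intros y Hy. apply Hy, clamp01_in.
Qed.

Lemma cont01_of_continuous f : (forall x, continuous f x) -> cont01 f.
Proof. intros H x. apply (continuous_comp clamp01 f); [apply continuous_clamp01 | apply H]. Qed.

Lemma cont01_const a : cont01 (fun _ => a).
Proof. intros x. apply continuous_const. Qed.

Lemma cont01_id : cont01 (fun x => x).
Proof. exact continuous_clamp01. Qed.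

Lemma cont01_plus f g : cont01 f -> cont01 g -> cont01 (fun r => f r + g r).
Proof. intros Hf Hg x. apply (continuous_plus (fun y => f (clamp01 y)) (fun y => g (clamp01 y))); auto. Qed.

Lemma cont01_mult f g : cont01 f -> cont01 g -> cont01 (fun r => f r * g r).
Proof. intros Hf Hg x. apply (continuous_mult (fun y => f (clamp01 y)) (fun y => g (clamp01 y))); auto. Qed.

Lemma cont01_comp f g :
  cont01 f -> (forall r, 0 <= r <= 1 -> continuous g (f r)) -> cont01 (fun r => g (f r)).
Proof. intros Hf Hg x. apply (continuous_comp (fun y => f (clamp01 y)) g); auto. apply Hg, clamp01_in. Qed.

Lemma cont01_scal a f : cont01 f -> cont01 (fun r => a * f r).
Proof. intros Hf. apply cont01_mult; [apply cont01_const | exact Hf]. Qed.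

Lemma cont01_minus f g : cont01 f -> cont01 g -> cont01 (fun r => f r - g r).
Proof. intros Hf Hg. apply cont01_plus; auto. apply (cont01_scal (-1)) in Hg.
  intros x. eapply continuous_ext; [|apply Hg]. intros; simpl; ring. Qed.

Lemma is_derive_clamp01 (F : R -> R) x l :
  0 < x < 1 -> is_derive F x l -> is_derive (fun y => F (clamp01 y)) x l.
Proof.
  intros Hx H. apply (is_derive_ext_loc F); auto.
  assert (Hd : 0 < Rmin x (1 - x)) by (apply Rmin_glb_lt; lra).
  exists (mkposreal _ Hd). intros y Hy. change (Rabs (y - x) < Rmin x (1 - x)) in Hy.
  assert (h1 := Rmin_l x (1 - x)). assert (h2 := Rmin_r x (1 - x)).
  rewrite clamp01_id; [reflexivity|]. unfold Rabs in Hy; destruct Rcase_abs in Hy; lra.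
Qed.

Lemma is_RInt_val_unique (f : R -> R) a b (u v : R) : is_RInt f a b u -> is_RInt f a b v -> u = v.
Proof.
  intros Hu Hv. apply (is_RInt_unique (V := R_CompleteNormedModule)) in Hu.
  apply (is_RInt_unique (V := R_CompleteNormedModule)) in Hv. congruence.
Qed.

Lemma is_RInt_ext01 (f g : R -> R) (v : R) :
  (forall x, 0 < x < 1 -> f x = g x) -> is_RInt f 0 1 v -> is_RInt g 0 1 v.
Proof.
  intros H. apply is_RInt_ext. intros x Hx.
  rewrite Rmin_left, Rmax_right in Hx by lra. apply H, Hx.
Qed.

Lemma is_RInt_const01 (a : R) : is_RInt (fun _ => a) 0 1 a.
Proof.
  assert (H := is_RInt_const 0 1 a). change (scal (1 - 0) a) with ((1 - 0) * a) in H.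
  replace ((1 - 0) * a) with a in H by ring. exact H.
Qed.

Definition prim01 (f : R -> R) (x : R) : R := RInt (fun y => f (clamp01 y)) 0 x.

Lemma is_derive_prim01 f : cont01 f -> forall x, is_derive (prim01 f) x (f (clamp01 x)).
Proof.
  intros Hf x. apply (is_derive_RInt (fun y => f (clamp01 y)) (prim01 f) 0); [|apply Hf].
  apply filter_forall. intros y. apply (RInt_correct (V := R_CompleteNormedModule)).
  apply (ex_RInt_continuous (V := R_CompleteNormedModule)). intros; apply Hf.
Qed.

Lemma prim01_0 f : prim01 f 0 = 0.
Proof. unfold prim01. rewrite RInt_point. reflexivity. Qed.

Lemma prim01_1 f v : is_RInt f 0 1 v -> prim01 f 1 = v.
Proof.
  intros Hv. apply (is_RInt_unique (V := R_CompleteNormedModule)).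
  apply (is_RInt_ext01 f); [|exact Hv]. intros x Hx. rewrite clamp01_id; lra.
Qed.

Lemma is_RInt_derive01 (F f : R -> R) a b :
  0 <= a -> a < b -> b <= 1 -> cont01 F -> cont01 f ->
  (forall x, a < x < b -> is_derive F x (f x)) -> is_RInt f a b (F b - F a).
Proof.
  intros Ha Hab Hb HF Hf HD.
  set (fc := fun y => f (clamp01 y)).
  assert (Hex : forall u v, ex_RInt fc u v).
  { intros u v. apply (ex_RInt_continuous (V := R_CompleteNormedModule)). intros; apply Hf. }
  set (G := fun x => RInt fc a x).
  assert (HG : forall x, is_derive G x (fc x)).
  { intros x. apply (is_derive_RInt fc G a); [|apply Hf].
    apply filter_forall. intros; apply (RInt_correct (V := R_CompleteNormedModule)), Hex. }
  set (H := fun x => F (clamp01 x) - G x).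
  destruct (MVT_gen H a b (fun _ => 0)) as [c [_ Hc]].
  - intros x Hx. rewrite Rmin_left, Rmax_right in Hx by lra.
    replace 0 with (f x - fc x) by (unfold fc; rewrite clamp01_id; lra).
    apply (is_derive_minus (fun y => F (clamp01 y)) G); [|apply HG].
    apply is_derive_clamp01; [lra | apply HD; lra].
  - intros x _. apply continuity_pt_filterlim.
    apply (continuous_minus (fun y => F (clamp01 y)) G); [apply HF|].
    apply (ex_derive_continuous G). eexists. apply HG.
  - unfold H, G in Hc. rewrite (clamp01_id a), (clamp01_id b), RInt_point in Hc by lra.
    change zero with 0 in Hc.
    apply (is_RInt_ext fc).
    + intros x Hx. rewrite Rmin_left, Rmax_right in Hx by lra. unfold fc. rewrite clamp01_id; lra.
    + replace (F b - F a) with (RInt fc a b) by lra.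
      apply (RInt_correct (V := R_CompleteNormedModule)), Hex.
Qed.

Lemma derive0_const01 F :
  cont01 F -> (forall x, 0 < x < 1 -> is_derive F x 0) ->
  forall r, 0 <= r <= 1 -> F r = F 0.
Proof.
  intros HF HD r Hr. destruct (Req_dec r 0) as [->|Hr0]; [reflexivity|].
  assert (Hi := is_RInt_derive01 F (fun _ => 0) 0 r ltac:(lra) ltac:(lra) ltac:(lra)
    HF (cont01_const 0) ltac:(intros; apply HD; lra)).
  assert (Hc := is_RInt_const 0 r 0). change (scal (r - 0) 0) with ((r - 0) * 0) in Hc.
  assert (E := is_RInt_val_unique _ _ _ _ _ Hi Hc). lra.
Qed.

Lemma cont01_sign f :
  cont01 f -> (forall r, 0 <= r <= 1 -> f r <> 0) ->
  exists sg, (sg = 1 \/ sg = -1) /\ forall r, 0 <= r <= 1 -> 0 < sg * f r.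
Proof.
  intros Hf Hnz.
  assert (Hsame : forall r, 0 <= r <= 1 -> 0 < f 0 * f r).
  { intros r Hr. destruct (Rlt_or_le 0 (f 0 * f r)) as [h|h]; [exact h|exfalso].
    assert (h0 := Hnz 0 ltac:(lra)). assert (h1 := Hnz r Hr).
    assert (Hneg : f 0 * f r < 0).
    { destruct h as [h|h]; [exact h|]. apply Rmult_integral in h. tauto. }
    destruct (IVT_gen (fun y => f (clamp01 y)) 0 r 0) as [x [_ Hx]].
    - intros x. apply continuity_pt_filterlim, Hf.
    - rewrite (clamp01_id 0), (clamp01_id r) by lra. unfold Rmin, Rmax; destruct Rle_dec; nra.
    - exact (Hnz (clamp01 x) (clamp01_in x) Hx). }
  assert (h0 := Hnz 0 ltac:(lra)).
  destruct (Rlt_or_le 0 (f 0)) as [h|h].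
  - exists 1. split; [now left|]. intros r Hr. assert (a := Hsame r Hr). nra.
  - exists (-1). split; [now right|]. intros r Hr. assert (a := Hsame r Hr). nra.
Qed.

Lemma linear_ode01 (f Y : R -> R) (a b : R) :
  cont01 f -> cont01 Y ->
  (forall x, 0 < x < 1 -> is_derive Y x ((a * f x + b) * Y x)) ->
  forall r, 0 <= r <= 1 -> Y r = Y 0 * exp (a * prim01 f r + b * r).
Proof.
  intros Hf HY HD r Hr.
  set (G := fun x => a * prim01 f x + b * x).
  assert (HG : forall x, is_derive G x (a * f (clamp01 x) + b)).
  { intros x. unfold G. auto_derive; [eexists; apply is_derive_prim01, Hf|].
    change (Derive (fun y => prim01 f y)) with (Derive (prim01 f)).
    rewrite (is_derive_unique _ _ _ (is_derive_prim01 f Hf x)). ring. }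
  assert (Hconst : Y r * exp (- G r) = Y 0 * exp (- G 0)).
  { apply (derive0_const01 (fun x => Y x * exp (- G x))); auto.
    - apply cont01_mult; [exact HY|]. apply cont01_of_continuous. intros x.
      apply (ex_derive_continuous (fun x => exp (- G x))).
      auto_derive. eexists. apply HG.
    - intros x Hx. assert (HYx := HD x Hx). assert (HGx := HG x).
      rewrite clamp01_id in HGx by lra.
      auto_derive; [split; [eexists; exact HYx | split; [eexists; exact HGx | tauto]]|].
      change (Derive (fun y => Y y)) with (Derive Y). change (Derive (fun y => G y)) with (Derive G).
      rewrite (is_derive_unique _ _ _ HYx), (is_derive_unique _ _ _ HGx). ring. }
  unfold G in Hconst. rewrite prim01_0 in Hconst.
  replace (- (a * 0 + b * 0)) with 0 in Hconst by ring. rewrite exp_0, Rmult_1_r in Hconst.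
  rewrite <- Hconst, Rmult_assoc, <- exp_plus. fold (G r).
  replace (- G r + G r) with 0 by ring. rewrite exp_0. ring.
Qed.

Lemma rsum_ext n f g : (forall i, (i < n)%nat -> f i = g i) -> rsum n f = rsum n g.
Proof.
  induction n as [|n IH]; simpl; intros H; [reflexivity|].
  f_equal; [apply IH; intros; apply H | apply H]; lia.
Qed.

Lemma rsum_plus n f g : rsum n (fun i => f i + g i) = rsum n f + rsum n g.
Proof. induction n as [|n IH]; simpl; [ring|]. rewrite IH; ring. Qed.

Lemma rsum_scal n a f : rsum n (fun i => a * f i) = a * rsum n f.
Proof. induction n as [|n IH]; simpl; [ring|]. rewrite IH; ring. Qed.

Lemma rsum_const n a : rsum n (fun _ => a) = INR n * a.
Proof. induction n as [|n IH]; simpl rsum; [simpl; ring|]. rewrite IH, S_INR. ring. Qed.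

Lemma rsum_nonneg n f : (forall i, (i < n)%nat -> 0 <= f i) -> 0 <= rsum n f.
Proof.
  induction n as [|n IH]; simpl; intros H; [lra|].
  assert (0 <= rsum n f) by (apply IH; intros; apply H; lia).
  assert (0 <= f n) by (apply H; lia). lra.
Qed.

Lemma is_derive_rsum n (f : nat -> R -> R) f' x :
  (forall i, (i < n)%nat -> is_derive (f i) x (f' i)) ->
  is_derive (fun r => rsum n (fun i => f i r)) x (rsum n f').
Proof.
  induction n as [|n IH]; simpl; intros H; [apply (is_derive_const 0)|].
  apply (is_derive_plus (fun r => rsum n (fun i => f i r)) (f n));
    [apply IH; intros; apply H | apply H]; lia.
Qed.

Lemma is_RInt_rsum n (f : nat -> R -> R) (v : nat -> R) :
  (forall i, (i < n)%nat -> is_RInt (f i) 0 1 (v i)) ->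
  is_RInt (fun r => rsum n (fun i => f i r)) 0 1 (rsum n v).
Proof.
  induction n as [|n IH]; simpl; intros H; [apply is_RInt_const01|].
  apply (is_RInt_plus (fun r => rsum n (fun i => f i r)) (f n));
    [apply IH; intros; apply H | apply H]; lia.
Qed.

Lemma cont01_rsum n (f : nat -> R -> R) :
  (forall i, (i < n)%nat -> cont01 (f i)) -> cont01 (fun r => rsum n (fun i => f i r)).
Proof.
  induction n as [|n IH]; simpl; intros H; [apply cont01_const|].
  apply cont01_plus; [apply IH; intros; apply H | apply H]; lia.
Qed.

Lemma exp_lt_1 x : x < 0 -> exp x < 1.
Proof. intros H. rewrite <- exp_0. apply exp_increasing, H. Qed.

Lemma exp_gt_1 x : 0 < x -> 1 < exp x.
Proof. intros H. rewrite <- exp_0. apply exp_increasing, H. Qed.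

Lemma exp_le_1 x : x <= 0 -> exp x <= 1.
Proof. intros [H | ->]; [left; apply exp_lt_1, H | rewrite exp_0; lra]. Qed.

Lemma exp_ge_1 x : 0 <= x -> 1 <= exp x.
Proof. intros [H | <-]; [left; apply exp_gt_1, H | rewrite exp_0; lra]. Qed.

Lemma exp_relation_opp_signs_false k D p q :
  0 < k -> k ^ 2 <= D ^ 2 -> 0 < p -> q < 0 ->
  p * (exp (k - D) - 1) <> q * (exp (- k - D) - 1).
Proof.
  intros Hk HkD Hp Hq E. destruct (Rle_or_lt k D) as [h|h].
  - assert (exp (k - D) <= 1) by (apply exp_le_1; lra).
    assert (exp (- k - D) < 1) by (apply exp_lt_1; lra). nra.
  - assert (D <= - k) by nra.
    assert (1 < exp (k - D)) by (apply exp_gt_1; lra).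
    assert (1 <= exp (- k - D)) by (apply exp_ge_1; lra). nra.
Qed.

Lemma exp_relation_boundary_false k D p q :
  0 < k -> k ^ 2 = D ^ 2 -> p <> 0 -> q <> 0 ->
  p * (exp (k - D) - 1) <> q * (exp (- k - D) - 1).
Proof.
  intros Hk HkD Hp Hq E.
  assert (D = k \/ D = - k) as [->| ->] by (apply Rsqr_eq; unfold Rsqr; simpl in HkD; nra).
  - replace (k - k) with 0 in E by ring. rewrite exp_0 in E.
    assert (exp (- k - k) < 1) by (apply exp_lt_1; lra).
    apply (Rmult_integral_contrapositive q (exp (- k - k) - 1)); [split; lra | lra].
  - replace (- k - - k) with 0 in E by ring. rewrite exp_0 in E.
    assert (1 < exp (k - - k)) by (apply exp_gt_1; lra).
    apply (Rmult_integral_contrapositive p (exp (k - - k) - 1)); [split; lra | lra].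
Qed.

Lemma cayley_ratio t s k :
  0 < k -> t ^ 2 * (s - k) = s + k -> (1 + t) / (1 - t) = - (s + t * (s - k)) / k.
Proof.
  intros Hk Ht. assert (t <> 1) by (intros ->; lra).
  field_simplify_eq; [|lra]. nra.
Qed.

Lemma cayley_quotient t0 t1 s0 s1 k :
  0 < k -> 0 <= t0 -> 0 <= t1 ->
  t0 ^ 2 * (s0 - k) = s0 + k -> t1 ^ 2 * (s1 - k) = s1 + k ->
  ((t1 + 1) * (- t0 + 1)) / ((1 - t1) * (1 + t0))
  = (s1 + t1 * (s1 - k)) / (s0 + t0 * (s0 - k)).
Proof.
  intros Hk H0 H1 E0 E1.
  assert (C0 := cayley_ratio t0 s0 k Hk E0). assert (C1 := cayley_ratio t1 s1 k Hk E1).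
  assert (t0 <> 1) by (intros ->; lra). assert (t1 <> 1) by (intros ->; lra).
  assert (N0 : s0 + t0 * (s0 - k) <> 0).
  { intros h. rewrite h in C0. assert (1 + t0 = 0); [|lra].
    apply (Rmult_eq_reg_r (/ (1 - t0))); [|apply Rinv_neq_0_compat; lra].
    unfold Rdiv in C0. rewrite C0. field. lra. }
  replace (((t1 + 1) * (- t0 + 1)) / ((1 - t1) * (1 + t0)))
    with (((1 + t1) / (1 - t1)) / ((1 + t0) / (1 - t0))) by (field; repeat split; lra).
  rewrite C0, C1. field. lra.
Qed.

Lemma sqrt_prod_of_ratio t sg p q :
  sg * sg = 1 -> 0 <= t -> 0 < sg * q -> t ^ 2 * q = p -> sqrt (p * q) = sg * t * q.
Proof.
  intros Hsg Ht Hq Hp. subst p.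
  replace (t ^ 2 * q * q) with ((sg * t * q) ^ 2)
    by (replace ((sg * t * q) ^ 2) with ((sg * sg) * t ^ 2 * q * q) by ring; rewrite Hsg; ring).
  apply sqrt_pow2. replace (sg * t * q) with (t * (sg * q)) by ring. nra.
Qed.

Lemma tan_sec_opp_atan t : tan (- atan t) + sec (- atan t) = sqrt (1 + t ^ 2) - t.
Proof.
  unfold sec. rewrite tan_neg, cos_neg, tan_atan, cos_atan. unfold Rsqr.
  replace (t * t) with (t ^ 2) by ring.
  assert (h : 0 < sqrt (1 + t ^ 2)) by (apply sqrt_lt_R0; nra). field. lra.
Qed.

(* Expanding [cos (atan t1) = cos (atan t0 - k)] with [cos (atan t) = 1/sqrt (1 + t^2)]. *)
Lemma atan_shift_cot k D t0 t1 :
  0 < k < PI -> atan t1 = atan t0 - k ->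
  1 + t1 ^ 2 = (1 + t0 ^ 2) * exp (- 2 * D) ->
  (cos k - exp D) / sin k = - t0.
Proof.
  intros Hk Ha HX.
  assert (Hs : 0 < sin k) by (apply sin_gt_0; lra).
  assert (s0 : 0 < sqrt (1 + t0 ^ 2)) by (apply sqrt_lt_R0; nra).
  assert (Hc : cos (atan t1) = cos (atan t0) * cos k + sin (atan t0) * sin k)
    by (rewrite Ha, cos_minus; ring).
  rewrite cos_atan, cos_atan, sin_atan in Hc. unfold Rsqr in Hc.
  replace (t0 * t0) with (t0 ^ 2) in Hc by ring. replace (t1 * t1) with (t1 ^ 2) in Hc by ring.
  assert (Hsq : sqrt (1 + t1 ^ 2) = sqrt (1 + t0 ^ 2) * exp (- D)).
  { rewrite HX. replace (exp (-2 * D)) with (exp (- D) ^ 2)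
      by (simpl; rewrite Rmult_1_r, <- exp_plus; f_equal; ring).
    rewrite sqrt_mult_alt by nra. rewrite sqrt_pow2; [reflexivity|]. left; apply exp_pos. }
  rewrite Hsq in Hc.
  assert (He : exp D * exp (- D) = 1) by (rewrite <- exp_plus, Rplus_opp_r; apply exp_0).
  assert (Hpos := exp_pos (- D)).
  assert (HeD : exp D = cos k + t0 * sin k).
  { replace (exp D) with (1 / (sqrt (1 + t0 ^ 2) * exp (- D)) * sqrt (1 + t0 ^ 2))
      by (field_simplify_eq; lra).
    rewrite Hc. field. lra. }
  rewrite HeD. field. lra.
Qed.

(* The arguments of the logarithms in [mfun], with [k = sqrt (d |lam|)]. *)
Definition mneg_arg (k D : R) : R :=
  let s := sqrt (- ((exp (2 * k) - exp (D + k)) / (exp (D + k) - 1))) in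
  ((exp k / s + 1) * (- (1 / s) + 1)) / ((1 - exp k / s) * (1 + 1 / s)).

Definition mpos_arg (k D : R) : R :=
  let a := atan ((cos k - exp D) / sin k) in
  let b := a + k in
  (tan b + sec b) / (tan a + sec a).

Section Riccati.

Variables (S : R -> R) (c D : R).
Hypothesis S_cont : cont01 S.
Hypothesis S_deriv : forall x, 0 < x < 1 -> is_derive S x (- S x ^ 2 - c).
Hypothesis S_int : is_RInt S 0 1 D.

Definition X (r : R) : R := S r ^ 2 + c.

Lemma cont01_X : cont01 X.
Proof.
  apply cont01_plus; [|apply cont01_const].
  apply (cont01_comp S (fun y => y ^ 2)); [exact S_cont|].
  intros; apply (ex_derive_continuous (fun y => y ^ 2)). auto_derive. exact I.
Qed.

Lemma X_sol r : 0 <= r <= 1 -> X r = X 0 * exp (-2 * prim01 S r).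
Proof.
  intros Hr.
  assert (HD : forall x, 0 < x < 1 -> is_derive X x ((-2 * S x + 0) * X x)).
  { intros x Hx. assert (H := S_deriv x Hx). unfold X. auto_derive; [eexists; exact H|].
    change (Derive (fun y => S y)) with (Derive S). rewrite (is_derive_unique _ _ _ H). ring. }
  rewrite (linear_ode01 S X (-2) 0 S_cont cont01_X HD r Hr). do 2 f_equal. ring.
Qed.

Lemma X_1 : X 1 = X 0 * exp (-2 * D).
Proof. rewrite X_sol, (prim01_1 S D S_int) by lra. reflexivity. Qed.

Lemma X_pos : 0 < X 0 -> forall r, 0 <= r <= 1 -> 0 < X r.
Proof. intros H r Hr. rewrite X_sol by exact Hr. apply Rmult_lt_0_compat; [exact H | apply exp_pos]. Qed.

Lemma is_RInt_sqrt_X_abs_ln sg :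
  (sg = 1 \/ sg = -1) -> (forall r, 0 <= r <= 1 -> 0 < X r) ->
  (forall r, 0 <= r <= 1 -> 0 < sg * S r + sqrt (X r)) ->
  is_RInt (fun r => sqrt (X r)) 0 1
    (Rabs (ln ((sg * S 1 + sqrt (X 1)) / (sg * S 0 + sqrt (X 0))))).
Proof.
  intros Hsg HX HW.
  set (W := fun r => sg * S r + sqrt (X r)).
  assert (Hi : is_RInt (fun r => sqrt (X r)) 0 1 (- sg * ln (W 1) - - sg * ln (W 0))).
  { apply (is_RInt_derive01 (fun r => - sg * ln (W r))); try lra.
    - apply cont01_scal, (cont01_comp W ln).
      + apply cont01_plus; [apply cont01_scal, S_cont|].
        apply (cont01_comp X sqrt); [apply cont01_X | intros; apply continuous_sqrt].
      + intros r Hr. apply continuous_ln, HW, Hr.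
    - apply (cont01_comp X sqrt); [apply cont01_X | intros; apply continuous_sqrt].
    - intros x Hx. assert (H := S_deriv x Hx).
      assert (hX := HX x ltac:(lra)). assert (hW := HW x ltac:(lra)).
      unfold W, X in *. replace (S x ^ 2) with (S x * (S x * 1)) in * by ring.
      auto_derive; [repeat split; try (eexists; exact H); lra|].
      change (Derive (fun y => S y)) with (Derive S). rewrite (is_derive_unique _ _ _ H).
      set (q := sqrt (S x * (S x * 1) + c)) in *.
      assert (qpos : 0 < q) by (apply sqrt_lt_R0; exact hX).
      assert (Hq : q * q = S x * (S x * 1) + c) by (apply sqrt_sqrt; lra).
      replace (- (S x * (S x * 1)) - c) with (- (q * q)) by lra.
      destruct Hsg; subst sg; field; lra. }
  assert (Hv : 0 <= - sg * ln (W 1) - - sg * ln (W 0)).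
  { apply (is_RInt_ge_0 _ 0 1 _ ltac:(lra) Hi). intros; apply sqrt_pos. }
  fold (W 0) (W 1). rewrite ln_div by (apply HW; lra).
  replace (Rabs (ln (W 1) - ln (W 0))) with (- sg * ln (W 1) - - sg * ln (W 0)); [exact Hi|].
  destruct Hsg; subst sg; [rewrite Rabs_left1 | rewrite Rabs_right]; lra.
Qed.

Lemma X0_eq0 : X 0 = 0 -> D = S 0 /\ is_RInt (fun r => sqrt (X r)) 0 1 0.
Proof.
  intros H0.
  assert (Hz : forall r, 0 <= r <= 1 -> X r = 0) by (intros r Hr; rewrite X_sol, H0 by exact Hr; ring).
  assert (Hc : forall r, 0 <= r <= 1 -> S r = S 0).
  { apply derive0_const01; [exact S_cont|]. intros x Hx.
    replace 0 with (- S x ^ 2 - c) by (assert (h := Hz x ltac:(lra)); unfold X in h; lra).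
    apply S_deriv, Hx. }
  split.
  - apply (is_RInt_val_unique S 0 1); [exact S_int|].
    apply (is_RInt_ext01 (fun _ => S 0)); [intros x Hx; symmetry; apply Hc; lra|].
    apply is_RInt_const01.
  - apply (is_RInt_ext01 (fun _ => 0)); [|apply is_RInt_const01].
    intros x Hx. rewrite Hz, sqrt_0 by lra. reflexivity.
Qed.

Lemma is_RInt_sqrt_X_c0 : c = 0 -> 0 < X 0 -> is_RInt (fun r => sqrt (X r)) 0 1 (Rabs D).
Proof.
  intros Hc0 H0.
  assert (Hnz : forall r, 0 <= r <= 1 -> S r <> 0).
  { intros r Hr h. assert (h0 := X_pos H0 r Hr). unfold X in h0. rewrite h, Hc0 in h0. lra. }
  destruct (cont01_sign S S_cont Hnz) as [sg [Hsg Hr]].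
  assert (Hi : is_RInt (fun r => sqrt (X r)) 0 1 (sg * D)).
  { apply (is_RInt_ext01 (fun r => sg * S r)); [|apply (is_RInt_scal S 0 1 sg D S_int)].
    intros x Hx. unfold X. rewrite Hc0, Rplus_0_r.
    replace (S x ^ 2) with ((sg * S x) ^ 2) by (destruct Hsg; subst; ring).
    rewrite sqrt_pow2; [reflexivity|]. left; apply Hr; lra. }
  assert (Hv : 0 <= sg * D) by (apply (is_RInt_ge_0 _ 0 1 _ ltac:(lra) Hi); intros; apply sqrt_pos).
  replace (Rabs D) with (sg * D); [exact Hi|].
  destruct Hsg; subst; [rewrite Rabs_right | rewrite Rabs_left1]; lra.
Qed.

Section Negative.

Variable k : R.
Hypothesis k_pos : 0 < k.
Hypothesis c_neg : c = - k ^ 2.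

(* [S + k] and [S - k] each solve a linear equation, since [S' = -(S + k)(S - k)]. *)
Lemma neg_endpoints :
  S 1 + k = (S 0 + k) * exp (k - D) /\ S 1 - k = (S 0 - k) * exp (- k - D).
Proof.
  assert (HS : forall a b x, 0 < x < 1 -> - S x ^ 2 - c = (- S x + a) * (S x + b) ->
                 is_derive (fun r => S r + b) x ((-1 * S x + a) * (S x + b))).
  { intros a b x Hx Hab. assert (H := S_deriv x Hx). auto_derive; [eexists; exact H|].
    change (Derive (fun y => S y)) with (Derive S). rewrite (is_derive_unique _ _ _ H). lra. }
  assert (Hp := linear_ode01 S (fun r => S r + k) (-1) k S_cont
    (cont01_plus _ _ S_cont (cont01_const k))
    ltac:(intros x Hx; apply HS; [exact Hx | rewrite c_neg; ring]) 1 ltac:(lra)).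
  assert (Hq := linear_ode01 S (fun r => S r + - k) (-1) (- k) S_cont
    (cont01_plus _ _ S_cont (cont01_const (- k)))
    ltac:(intros x Hx; apply HS; [exact Hx | rewrite c_neg; ring]) 1 ltac:(lra)).
  simpl in Hp, Hq. rewrite (prim01_1 S D S_int) in Hp, Hq.
  split.
  - rewrite Hp. replace (k - D) with (-1 * D + k * 1) by ring. reflexivity.
  - replace (S 1 - k) with (S 1 + - k) by ring. rewrite Hq.
    replace (- k - D) with (-1 * D + - k * 1) by ring. ring.
Qed.

Lemma neg_S0_constraint : (S 0 + k) * (exp (k - D) - 1) = (S 0 - k) * (exp (- k - D) - 1).
Proof. destruct neg_endpoints as [Hp Hq]. nra. Qed.

Lemma neg_X0_nonneg : - D ^ 2 <= c -> 0 <= X 0.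
Proof.
  intros Hb. destruct (Rle_or_lt 0 (X 0)) as [h|h]; [exact h|exfalso].
  unfold X in h. rewrite c_neg in h.
  apply (exp_relation_opp_signs_false k D (S 0 + k) (S 0 - k)); try nra. apply neg_S0_constraint.
Qed.

Lemma neg_X0_boundary : c = - D ^ 2 -> ~ 0 < X 0.
Proof.
  intros Hb h. unfold X in h. rewrite c_neg in h.
  apply (exp_relation_boundary_false k D (S 0 + k) (S 0 - k)); try nra. apply neg_S0_constraint.
Qed.

Lemma X_neg_factor r : X r = (S r + k) * (S r - k).
Proof. unfold X. rewrite c_neg. ring. Qed.

Lemma neg_Cminus :
  S 0 + k <> 0 -> k ^ 2 <> D ^ 2 ->
  - ((exp (2 * k) - exp (D + k)) / (exp (D + k) - 1)) = (S 0 - k) / (S 0 + k).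
Proof.
  intros np0 Hne.
  assert (HE : exp (D + k) <> 1).
  { intros e. rewrite <- exp_0 in e. apply exp_inv in e. apply Hne.
    replace D with (- k) by lra. ring. }
  assert (HEp := exp_pos (D + k)).
  assert (HB : exp (- k - D) = / exp (D + k)) by (rewrite <- exp_Ropp; f_equal; ring).
  assert (HB1 : / exp (D + k) <> 1).
  { intros e. apply HE. rewrite <- (Rinv_inv (exp (D + k))), e. apply Rinv_1. }
  assert (Hq0 : S 0 - k = (S 0 + k) * (exp (k - D) - 1) / (/ exp (D + k) - 1))
    by (rewrite <- HB, neg_S0_constraint, HB; field; lra).
  rewrite Hq0. replace (exp (2 * k)) with (exp (k - D) * exp (D + k))
    by (rewrite <- exp_plus; f_equal; ring).
  field. repeat split; lra.
Qed.

(* [1 / sqrt (- C_-)] and [exp k / sqrt (- C_-)] are the values of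
   [sqrt ((S + k) / (S - k))] at [0] and at [1]. *)
Lemma mneg_arg_eq sg :
  (sg = 1 \/ sg = -1) -> (forall r, 0 <= r <= 1 -> k < sg * S r) -> k ^ 2 <> D ^ 2 ->
  mneg_arg k D = (sg * S 1 + sqrt (X 1)) / (sg * S 0 + sqrt (X 0)).
Proof.
  intros Hsg Hr Hne.
  assert (Hsg2 : sg * sg = 1) by (destruct Hsg; subst; ring).
  assert (h0 := Hr 0 ltac:(lra)). assert (h1 := Hr 1 ltac:(lra)).
  assert (a0 : 0 < sg * (S 0 + k)) by (destruct Hsg; subst; lra).
  assert (b0 : 0 < sg * (S 0 - k)) by (destruct Hsg; subst; lra).
  assert (b1 : 0 < sg * (S 1 - k)) by (destruct Hsg; subst; lra).
  assert (np0 : S 0 + k <> 0) by (intros e; rewrite e in a0; lra).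
  assert (nq0 : S 0 - k <> 0) by (intros e; rewrite e in b0; lra).
  set (u := (S 0 - k) / (S 0 + k)).
  assert (Hu0 : 0 < u).
  { replace u with ((sg * (S 0 - k)) / (sg * (S 0 + k)))
      by (unfold u; field; destruct Hsg; subst; lra).
    apply Rdiv_lt_0_compat; assumption. }
  assert (Hu := sqrt_lt_R0 u Hu0).
  set (t0 := / sqrt u). set (t1 := exp k * t0).
  assert (E0 : t0 ^ 2 * (S 0 - k) = S 0 + k).
  { unfold t0. rewrite pow_inv, pow2_sqrt by lra.
    unfold u. field. split; assumption. }
  assert (E1 : t1 ^ 2 * (S 1 - k) = S 1 + k).
  { destruct neg_endpoints as [Hp1 Hq1]. unfold t1. rewrite Hq1, Hp1, <- E0.
    replace ((exp k * t0) ^ 2 * ((S 0 - k) * exp (- k - D)))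
      with (t0 ^ 2 * (S 0 - k) * (exp k * exp k * exp (- k - D))) by ring.
    rewrite <- !exp_plus. do 2 f_equal. ring. }
  assert (t0nn : 0 <= t0) by (left; apply Rinv_0_lt_compat, Hu).
  assert (t1nn : 0 <= t1) by (apply Rmult_le_pos; [left; apply exp_pos | exact t0nn]).
  unfold mneg_arg. cbv zeta. rewrite (neg_Cminus np0 Hne). fold u.
  replace (1 / sqrt u) with t0 by (unfold t0; field; lra).
  replace (exp k / sqrt u) with t1 by (unfold t1, t0; field; lra).
  rewrite (cayley_quotient t0 t1 (S 0) (S 1) k k_pos t0nn t1nn E0 E1), !X_neg_factor.
  rewrite (sqrt_prod_of_ratio t0 sg (S 0 + k) (S 0 - k)),
          (sqrt_prod_of_ratio t1 sg (S 1 + k) (S 1 - k)) by assumption.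
  assert (Hw : 0 < sg * (S 0 + t0 * (S 0 - k))) by nra.
  replace (sg * S 0 + sg * t0 * (S 0 - k)) with (sg * (S 0 + t0 * (S 0 - k))) by ring.
  field. split; intros e; rewrite e in Hw; lra.
Qed.

Lemma is_RInt_sqrt_X_neg :
  0 < X 0 -> k ^ 2 <> D ^ 2 -> is_RInt (fun r => sqrt (X r)) 0 1 (Rabs (ln (mneg_arg k D))).
Proof.
  intros H0 Hne. assert (HX := X_pos H0).
  assert (Hk2 : forall r, 0 <= r <= 1 -> k ^ 2 < S r ^ 2).
  { intros r Hr. assert (h := HX r Hr). rewrite X_neg_factor in h. nra. }
  assert (Hnz : forall r, 0 <= r <= 1 -> S r <> 0).
  { intros r Hr e. assert (h := Hk2 r Hr). rewrite e in h. nra. }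
  destruct (cont01_sign S S_cont Hnz) as [sg [Hsg Hpos]].
  assert (Hr : forall r, 0 <= r <= 1 -> k < sg * S r).
  { intros r Hr. assert (h := Hk2 r Hr). assert (h' := Hpos r Hr).
    replace (S r ^ 2) with ((sg * S r) ^ 2) in h by (destruct Hsg; subst; ring). nra. }
  rewrite (mneg_arg_eq sg Hsg Hr Hne).
  apply is_RInt_sqrt_X_abs_ln; [exact Hsg | exact HX|].
  intros r Hr'. assert (h := Hr r Hr'). assert (0 <= sqrt (X r)) by apply sqrt_pos. lra.
Qed.

End Negative.

Section Positive.

Variable k : R.
Hypothesis k_range : 0 < k < PI.
Hypothesis c_pos : c = k ^ 2.

Lemma pos_atan_flow : atan (S 1 / k) = atan (S 0 / k) - k.
Proof.
  assert (Hcont : cont01 (fun r => atan (S r / k) + k * r)).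
  { apply cont01_plus; [|apply cont01_scal, cont01_id].
    apply (cont01_comp (fun r => S r / k) atan); [apply cont01_mult; [exact S_cont | apply cont01_const]|].
    intros; apply (ex_derive_continuous atan); eexists; apply is_derive_atan. }
  assert (Hder : forall x, 0 < x < 1 -> is_derive (fun r => atan (S r / k) + k * r) x 0).
  { intros x Hx. assert (Hx' := S_deriv x Hx). auto_derive; [eexists; exact Hx'|].
    change (Derive (fun y => S y)) with (Derive S). rewrite (is_derive_unique _ _ _ Hx'), c_pos.
    field. split; [lra | nra]. }
  assert (H := derive0_const01 _ Hcont Hder 1 ltac:(lra)). simpl in H. lra.
Qed.

Lemma pos_sqrt_X r : sqrt (1 + (S r / k) ^ 2) = sqrt (X r) / k.
Proof.
  unfold X. rewrite c_pos.
  replace (S r ^ 2 + k ^ 2) with (k ^ 2 * (1 + (S r / k) ^ 2)) by (field; lra).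
  rewrite sqrt_mult_alt, sqrt_pow2 by (lra || apply pow2_ge_0). field. lra.
Qed.

Lemma pos_S_lt_sqrt_X r : S r < sqrt (X r).
Proof.
  unfold X. rewrite c_pos. destruct (Rle_or_lt (S r) 0) as [h|h].
  - assert (0 < sqrt (S r ^ 2 + k ^ 2)) by (apply sqrt_lt_R0; nra). lra.
  - rewrite <- (sqrt_pow2 (S r)) at 1 by lra. apply sqrt_lt_1; nra.
Qed.

Lemma mpos_arg_eq : mpos_arg k D = (-1 * S 1 + sqrt (X 1)) / (-1 * S 0 + sqrt (X 0)).
Proof.
  assert (Hflow := pos_atan_flow).
  assert (HX1 : 1 + (S 1 / k) ^ 2 = (1 + (S 0 / k) ^ 2) * exp (- 2 * D)).
  { assert (h := X_1). unfold X in h. rewrite c_pos in h.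
    apply (Rmult_eq_reg_l (k ^ 2)); [|apply pow_nonzero; lra].
    transitivity (S 1 ^ 2 + k ^ 2); [field; lra|]. rewrite h. field. lra. }
  unfold mpos_arg. cbv zeta.
  rewrite (atan_shift_cot k D (S 0 / k) (S 1 / k) k_range Hflow HX1), atan_opp.
  replace (- atan (S 0 / k) + k) with (- atan (S 1 / k)) by lra.
  rewrite !tan_sec_opp_atan, !pos_sqrt_X.
  assert (h := pos_S_lt_sqrt_X 0). field. lra.
Qed.

Lemma is_RInt_sqrt_X_pos : is_RInt (fun r => sqrt (X r)) 0 1 (Rabs (ln (mpos_arg k D))).
Proof.
  rewrite mpos_arg_eq. apply is_RInt_sqrt_X_abs_ln; [now right | |].
  - intros r _. unfold X. rewrite c_pos. nra.
  - intros r _. assert (h := pos_S_lt_sqrt_X r). lra.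
Qed.

End Positive.

Lemma X0_nonneg : - D ^ 2 <= c -> 0 <= X 0.
Proof.
  intros Hb. destruct (Rlt_or_le c 0) as [Hc|Hc]; [|unfold X; nra].
  apply (neg_X0_nonneg (sqrt (- c))); [apply sqrt_lt_R0; lra | rewrite pow2_sqrt; lra | exact Hb].
Qed.

End Riccati.

Lemma is_RInt_sqrt_X_mfun d D lam S :
  0 < INR d -> - D ^ 2 / INR d <= lam -> lam < PI ^ 2 / INR d -> cont01 S ->
  (forall x, 0 < x < 1 -> is_derive S x (- S x ^ 2 - INR d * lam)) -> is_RInt S 0 1 D ->
  is_RInt (fun r => sqrt (X S (INR d * lam) r)) 0 1 (mfun d D lam).
Proof.
  intros Hd Hb Hu HC HD HI.
  assert (Hb' : - D ^ 2 <= INR d * lam).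
  { replace (- D ^ 2) with (INR d * (- D ^ 2 / INR d)) by (field; lra).
    apply Rmult_le_compat_l; lra. }
  assert (Hu' : INR d * lam < PI ^ 2).
  { replace (PI ^ 2) with (INR d * (PI ^ 2 / INR d)) by (field; lra).
    apply Rmult_lt_compat_l; lra. }
  assert (HX0 := X0_nonneg S _ D HC HD HI Hb').
  unfold mfun. destruct (Rlt_dec lam 0) as [Hl|Hl]; [|destruct (Req_EM_T lam 0) as [H0|H0]].
  - set (k := sqrt (INR d * - lam)).
    assert (Hk : 0 < k) by (apply sqrt_lt_R0; nra).
    assert (Hkc : INR d * lam = - k ^ 2) by (unfold k; rewrite pow2_sqrt; nra).
    destruct (Req_EM_T lam (- D ^ 2 / INR d)) as [Heq|Hne]; [|destruct HX0 as [HX0|HX0]].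
    + apply (X0_eq0 S _ D HC HD HI). destruct HX0 as [h|h]; [exfalso|auto].
      apply (neg_X0_boundary S _ D HC HD HI k Hk Hkc); [rewrite Heq; field; lra | exact h].
    + apply (is_RInt_sqrt_X_neg S _ D HC HD HI k Hk Hkc HX0).
      intros e. apply Hne. apply (Rmult_eq_reg_l (INR d)); [|lra].
      rewrite Hkc, e. field. lra.
    + exfalso. destruct (X0_eq0 S _ D HC HD HI (eq_sym HX0)) as [e _].
      unfold X in HX0. rewrite <- e in HX0. apply Hne.
      apply (Rmult_eq_reg_l (INR d)); [|lra]. field_simplify; lra.
  - rewrite H0, Rmult_0_r in *. destruct HX0 as [HX0|HX0].
    + exact (is_RInt_sqrt_X_c0 S 0 D HC HD HI eq_refl HX0).
    + destruct (X0_eq0 S 0 D HC HD HI (eq_sym HX0)) as [e Hi].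
      unfold X in HX0. rewrite <- e in HX0. replace (Rabs D) with 0; [exact Hi|].
      assert (HD0 : D = 0) by nra. rewrite HD0, Rabs_R0. reflexivity.
  - set (k := sqrt (INR d * lam)).
    assert (Hk : 0 < k < PI).
    { split; [apply sqrt_lt_R0; nra|]. unfold k. rewrite <- (sqrt_pow2 PI) by (left; apply PI_RGT_0).
      apply sqrt_lt_1; nra. }
    assert (Hkc : INR d * lam = k ^ 2) by (unfold k; rewrite pow2_sqrt; nra).
    exact (is_RInt_sqrt_X_pos S _ D HC HD HI k Hk Hkc).
Qed.

Lemma rsum_sq_deviation n (a : nat -> R) :
  (0 < n)%nat ->
  rsum n (fun i => a i ^ 2)
  = rsum n (fun i => (a i - rsum n a / INR n) ^ 2) + (rsum n a) ^ 2 / INR n.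
Proof.
  intros Hn. assert (0 < INR n) by (apply lt_0_INR; exact Hn).
  rewrite (rsum_ext n (fun i => (a i - rsum n a / INR n) ^ 2)
    (fun i => a i ^ 2 + (-2 * (rsum n a / INR n) * a i + (rsum n a / INR n) ^ 2)))
    by (intros; ring).
  rewrite !rsum_plus, rsum_scal, rsum_const. field. lra.
Qed.

Lemma sqrt_mult_pos_eq_iff a b p :
  0 <= a -> 0 <= b -> 0 < p -> (sqrt a * p = sqrt b <-> a * p ^ 2 = b).
Proof.
  intros Ha Hb Hp.
  replace (sqrt a * p) with (sqrt (a * p ^ 2))
    by (rewrite sqrt_mult_alt, sqrt_pow2 by (lra || nra); reflexivity).
  split; [apply sqrt_inj; nra | intros ->; reflexivity].
Qed.

Lemma energy_identity_iff n lam S0 Q p :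
  1 < n -> 0 <= S0 ^ 2 + n * lam -> 0 <= Q -> 0 < p ->
  ((n - 1) * lam = Q + S0 ^ 2 / n - S0 ^ 2
   <-> sqrt (S0 ^ 2 + n * lam) * p = sqrt (n / (n - 1) * (p ^ 2 * Q))).
Proof.
  intros Hn HX HQ Hp.
  rewrite sqrt_mult_pos_eq_iff; [| exact HX | | exact Hp].
  - assert (Hp2 : 0 < p ^ 2) by nra.
    transitivity (Q = (n - 1) / n * (S0 ^ 2 + n * lam)).
    + split; intros H; [replace Q with ((n - 1) * lam - S0 ^ 2 / n + S0 ^ 2) by lra |
        rewrite H]; field; lra.
    + split; intros H.
      * rewrite H. field. lra.
      * apply (Rmult_eq_reg_l (p ^ 2)); [|lra].
        transitivity ((n - 1) / n * (n / (n - 1) * (p ^ 2 * Q))); [field; lra|].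
        rewrite <- H. field. lra.
  - apply Rmult_le_pos; [apply Rlt_le, Rdiv_lt_0_compat; lra | nra].
Qed.

Definition decay (S : R -> R) (r : R) : R := exp (- prim01 S r).

Lemma continuous_decay S : cont01 S -> forall x, continuous (decay S) x.
Proof.
  intros HS x. apply (ex_derive_continuous (decay S)). unfold decay.
  auto_derive. eexists. apply is_derive_prim01, HS.
Qed.

Lemma is_RInt_decay S : cont01 S -> is_RInt (decay S) 0 1 (RInt (decay S) 0 1).
Proof.
  intros HS. apply (RInt_correct (V := R_CompleteNormedModule)).
  apply (ex_RInt_continuous (V := R_CompleteNormedModule)). intros; apply continuous_decay, HS.
Qed.

Lemma RInt_decay_pos S : cont01 S -> 0 < RInt (decay S) 0 1.
Proof.
  intros HS.
  assert (h := RInt_lt (fun _ => 0) (decay S) 0 1 ltac:(lra) (fun x _ => continuous_decay S HS x)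
    (fun x _ => continuous_const 0 x) (fun x _ => exp_pos _)).
  rewrite RInt_const in h. change (scal (1 - 0) 0) with ((1 - 0) * 0) in h. lra.
Qed.

Section System.

Variables (d : nat) (Dv : nat -> R) (lam : R) (L : nat -> R -> R).
Hypothesis d_ge2 : (2 <= d)%nat.
Hypothesis L_cont : forall i, (i < d)%nat -> cont01 (L i).
Hypothesis L_deriv : forall i, (i < d)%nat -> forall r, 0 < r < 1 ->
  is_derive (L i) r (- (rsum d (fun k => L k r)) * L i r - lam).
Hypothesis L_int : forall i, (i < d)%nat -> is_RInt (L i) 0 1 (Dv i).

Definition Lsum (r : R) : R := rsum d (fun k => L k r).

Lemma INR_d_ge2 : 2 <= INR d.
Proof. replace 2 with (INR 2) by (simpl; ring). apply le_INR, d_ge2. Qed.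

Lemma cont01_Lsum : cont01 Lsum.
Proof. apply cont01_rsum, L_cont. Qed.

Lemma Lsum_deriv x : 0 < x < 1 -> is_derive Lsum x (- Lsum x ^ 2 - INR d * lam).
Proof.
  intros Hx.
  assert (H : is_derive Lsum x (rsum d (fun i => - Lsum x * L i x + - lam)))
    by (apply is_derive_rsum; intros i Hi; apply L_deriv; auto).
  rewrite rsum_plus, rsum_scal, rsum_const in H. fold (Lsum x) in H.
  replace (- Lsum x ^ 2 - INR d * lam) with (- Lsum x * Lsum x + INR d * - lam) by ring. exact H.
Qed.

Lemma Lsum_int : is_RInt Lsum 0 1 (rsum d Dv).
Proof. apply is_RInt_rsum, L_int. Qed.

Lemma deviation_decay i :
  (i < d)%nat -> forall r, 0 <= r <= 1 ->
  L i r - Lsum r / INR d = (L i 0 - Lsum 0 / INR d) * decay Lsum r.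
Proof.
  intros Hi r Hr. assert (Hd := INR_d_ge2).
  assert (Hc : cont01 (fun r => L i r - Lsum r / INR d)).
  { apply cont01_minus; [apply L_cont, Hi|]. apply cont01_mult; [apply cont01_Lsum | apply cont01_const]. }
  assert (HD : forall x, 0 < x < 1 ->
            is_derive (fun r => L i r - Lsum r / INR d) x
              ((-1 * Lsum x + 0) * (L i x - Lsum x / INR d))).
  { intros x Hx. assert (H1 := L_deriv i Hi x Hx). assert (H2 := Lsum_deriv x Hx).
    fold (Lsum x) in H1. auto_derive; [split; [eexists; exact H1 | split; [eexists; exact H2 | tauto]]|].
    change (Derive (fun y => L i y)) with (Derive (L i)).
    change (Derive (fun y => Lsum y)) with (Derive Lsum).
    rewrite (is_derive_unique _ _ _ H1), (is_derive_unique _ _ _ H2). field. lra. }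
  rewrite (linear_ode01 Lsum _ (-1) 0 cont01_Lsum Hc HD r Hr).
  unfold decay. do 2 f_equal. ring.
Qed.

Lemma deviation_integral i :
  (i < d)%nat ->
  Dv i - rsum d Dv / INR d = (L i 0 - Lsum 0 / INR d) * RInt (decay Lsum) 0 1.
Proof.
  intros Hi. apply (is_RInt_val_unique (fun r => L i r - Lsum r / INR d) 0 1).
  - apply (is_RInt_minus (L i) (fun r => Lsum r / INR d)); [apply L_int, Hi|].
    apply (is_RInt_ext (fun r => scal (/ INR d) (Lsum r))); [intros; apply Rmult_comm|].
    replace (rsum d Dv / INR d) with (scal (/ INR d) (rsum d Dv)) by apply Rmult_comm.
    exact (is_RInt_scal Lsum 0 1 (/ INR d) (rsum d Dv) Lsum_int).
  - apply (is_RInt_ext01 (fun r => (L i 0 - Lsum 0 / INR d) * decay Lsum r)).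
    + intros x Hx. symmetry. apply deviation_decay; [exact Hi | lra].
    + apply (is_RInt_scal (decay Lsum)), is_RInt_decay, cont01_Lsum.
Qed.

Lemma X0_Lsum_nonneg :
  - rsum d Dv ^ 2 / INR d <= lam -> 0 <= X Lsum (INR d * lam) 0.
Proof.
  intros Hb. assert (Hd := INR_d_ge2).
  apply (X0_nonneg Lsum _ (rsum d Dv) cont01_Lsum Lsum_deriv Lsum_int).
  replace (- rsum d Dv ^ 2) with (INR d * (- rsum d Dv ^ 2 / INR d)) by (field; lra).
  apply Rmult_le_compat_l; lra.
Qed.

Lemma mfun_factor :
  - rsum d Dv ^ 2 / INR d <= lam -> lam < PI ^ 2 / INR d ->
  mfun d (rsum d Dv) lam = sqrt (X Lsum (INR d * lam) 0) * RInt (decay Lsum) 0 1.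
Proof.
  intros Hb Hu. assert (Hd := INR_d_ge2).
  apply (is_RInt_val_unique (fun r => sqrt (X Lsum (INR d * lam) r)) 0 1).
  - apply is_RInt_sqrt_X_mfun; try lra; [exact cont01_Lsum | exact Lsum_deriv | exact Lsum_int].
  - apply (is_RInt_ext01 (fun r => sqrt (X Lsum (INR d * lam) 0) * decay Lsum r)).
    + intros x Hx. rewrite (X_sol Lsum _ cont01_Lsum Lsum_deriv x) by lra.
      replace (exp (-2 * prim01 Lsum x)) with (decay Lsum x ^ 2)
        by (unfold decay; simpl; rewrite Rmult_1_r, <- exp_plus; f_equal; ring).
      rewrite sqrt_mult_alt by (apply X0_Lsum_nonneg, Hb).
      rewrite sqrt_pow2 by (left; apply exp_pos). reflexivity.
    + apply (is_RInt_scal (decay Lsum)), is_RInt_decay, cont01_Lsum.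
Qed.

End System.

Theorem lemma3p4 (d : nat) (Dv : nat -> R) (lam : R) (L : nat -> R -> R) :
  (2 <= d)%nat ->
  - (rsum d Dv) ^ 2 / INR d <= lam ->
  lam < PI ^ 2 / INR d ->
  (* L_i continuous on [0,1] (one-sided at the endpoints) *)
  (forall i, (i < d)%nat -> forall r, 0 <= r <= 1 ->
     filterlim (L i) (within (fun x => 0 <= x <= 1) (locally r)) (locally (L i r))) ->
  (* L_i' = -(sum_k L_k) L_i - lam on (0,1)  (hence on [0,1], L in C^1) *)
  (forall i, (i < d)%nat -> forall r, 0 < r < 1 ->
     is_derive (L i) r (- (rsum d (fun k => L k r)) * L i r - lam)) ->
  (* int_0^1 L_i = D_i *)
  (forall i, (i < d)%nat -> is_RInt (L i) 0 1 (Dv i)) ->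
  ((INR d - 1) * lam
     = rsum d (fun i => (L i 0) ^ 2) - (rsum d (fun i => L i 0)) ^ 2
   <->
   mfun d (rsum d Dv) lam
     = sqrt (INR d / (INR d - 1)
             * rsum d (fun i => (Dv i - rsum d Dv / INR d) ^ 2))).
Proof.
  intros Hd2 Hb Hu Hcont Hder Hint.
  assert (HL : forall i, (i < d)%nat -> cont01 (L i)) by (intros; apply cont01_of_within; auto).
  assert (Hd := INR_d_ge2 d Hd2).
  set (Phi := RInt (decay (Lsum d L)) 0 1).
  set (Q := rsum d (fun i => (L i 0 - Lsum d L 0 / INR d) ^ 2)).
  assert (HS : rsum d (fun i => L i 0 ^ 2) = Q + Lsum d L 0 ^ 2 / INR d)
    by exact (rsum_sq_deviation d (fun i => L i 0) ltac:(lia)).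
  assert (HV : rsum d (fun i => (Dv i - rsum d Dv / INR d) ^ 2) = Phi ^ 2 * Q).
  { unfold Q. rewrite <- rsum_scal. apply rsum_ext. intros i Hi.
    rewrite (deviation_integral d Dv lam L Hd2 HL Hder Hint i Hi). fold Phi. ring. }
  rewrite HS, HV, (mfun_factor d Dv lam L Hd2 HL Hder Hint Hb Hu).
  apply energy_identity_iff.
  - lra.
  - exact (X0_Lsum_nonneg d Dv lam L Hd2 HL Hder Hint Hb).
  - apply rsum_nonneg. intros; apply pow2_ge_0.
  - apply RInt_decay_pos, cont01_Lsum, HL.
Qed.
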